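(* For every integer $h\ge0$, let $\mathrm{Horiz}_h(z)=\sum_{n\ge0}a_{n,h}z^n$, where $a_{n,h}$ is the number of Motzkin paths of length $n$ of height exactly $h$ that have at least one horizontal step on level $h$, and let $\mathrm{NoHoriz}_h(z)=\sum_{n\ge0}b_{n,h}z^n$, where $b_{n,h}$ is the number of Motzkin paths of length $n$ of height exactly $h$ that have no horizontal step on level $h$. Then $$\mathrm{Horiz}_h(z)=(1+v+v^2)(1-v^{-2})\Big[\frac{v^{2h+4}}{1-v^{2h+4}}-\frac{v^{2h+3}}{1-v^{2h+3}}\Big],$$ $$\mathrm{NoHoriz}_h(z)=(1+v+v^2)(1-v^{-2})\Big[\frac{v^{2h+3}}{1-v^{2h+3}}-\frac{v^{2h+2}}{1-v^{2h+2}}\Big].$$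
   Context: A Motzkin path of length $n$ is a sequence of $n$ steps, each an up-step $(1,1)$, a down-step $(1,-1)$ or a horizontal step $(1,0)$, starting at $(0,0)$, ending at $(n,0)$, and never going below the $x$-axis. Its height is the maximal $y$-coordinate reached. A horizontal step on level $j$ is a horizontal step from $(x,j)$ to $(x+1,j)$. Throughout, $v=v(z)=\frac{1-z-\sqrt{1-2z-3z^2}}{2z}=z+z^2+\cdots$ denotes the formal power series with $v(0)=0$ satisfying $z=\frac{v}{1+v+v^2}$; the expressions above are formal Laurent series in $v$ which are in fact power series in $v$, hence in $z$. *)

From mathcomp Require Import all_boot all_algebra.
Set Implicit Arguments. Unset Strict Implicit. Unset Printing Implicit Defensive.
Import GRing.Theory Num.Theory.
Local Open Scope ring_scope.

Inductive step := Up | Down | Flat.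

Definition step_delta (a : step) : int :=
  match a with Up => 1 | Down => -1 | Flat => 0 end.

Fixpoint words (n : nat) : seq (seq step) :=
  match n with
  | 0 => [:: [::]]
  | n'.+1 => flatten [seq [:: Up :: w; Down :: w; Flat :: w] | w <- words n']
  end.

Fixpoint levels (y : int) (s : seq step) : seq int :=
  match s with
  | [::] => [::]
  | a :: s' => (y + step_delta a) :: levels (y + step_delta a) s'
  end.

Definition is_motzkin (s : seq step) : bool :=
  all (fun y => 0 <= y) (levels 0 s) && (last 0 (levels 0 s) == 0).

Definition path_height (s : seq step) : int := foldr Num.max 0 (levels 0 s).

Fixpoint horiz_levels (y : int) (s : seq step) : seq int :=
  match s with
  | [::] => [::]
  | a :: s' => (if a is Flat then [:: y] else [::]) ++ horiz_levels (y + step_delta a) s'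
  end.

Definition a_count (n h : nat) : nat :=
  count (fun s => [&& is_motzkin s, path_height s == h%:Z & (h%:Z \in horiz_levels 0 s)])
        (words n).

Definition b_count (n h : nat) : nat :=
  count (fun s => [&& is_motzkin s, path_height s == h%:Z & (h%:Z \notin horiz_levels 0 s)])
        (words n).

Definition fps := nat -> rat.

Definition fps_const (c : rat) : fps := fun n => if n is 0 then c else 0.
Definition fps_one : fps := fps_const 1.
Definition fps_X : fps := fun n => if n == 1%N then 1 else 0.
Definition fps_add (f g : fps) : fps := fun n => f n + g n.
Definition fps_sub (f g : fps) : fps := fun n => f n - g n.
Definition fps_mul (f g : fps) : fps := fun n => \sum_(i < n.+1) f i * g (n - i)%N.
Definition fps_pow (f : fps) (k : nat) : fps := iter k (fps_mul f) fps_one.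

(* first n+1 coefficients of the multiplicative inverse of f (f 0 <> 0) *)
Fixpoint inv_seq (f : fps) (n : nat) : seq rat :=
  match n with
  | 0 => [:: (f 0%N)^-1]
  | n'.+1 => let s := inv_seq f n' in
      rcons s (- (f 0%N)^-1 * \sum_(i < n'.+1) f i.+1 * nth 0 s (n' - i)%N)
  end.
Definition fps_inv (f : fps) : fps := fun n => nth 0 (inv_seq f n) n.

Definition Horiz (h : nat) : fps := fun n => (a_count n h)%:R.
Definition NoHoriz (h : nat) : fps := fun n => (b_count n h)%:R.

Definition onevv (v : fps) : fps := fps_add fps_one (fps_add v (fps_pow v 2)).

(* (1 - v^{-2}) * v^k / (1 - v^k) = (v^k - v^(k-2)) / (1 - v^k), for k >= 2 *)
Definition term (v : fps) (k : nat) : fps :=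
  fps_mul (fps_sub (fps_pow v k) (fps_pow v (k - 2)))
          (fps_inv (fps_sub fps_one (fps_pow v k))).

(* For a height bound h, a flag f and a start level y <= h, let c_n(y) be the
   number of step words of length n that go from level y to level 0 inside the strip
   0 <= level <= h and that, unless f holds, use no horizontal step on level h.  Removing the
   first step gives the transfer recursion
     c_0(y) = [y = 0],  c_{n+1}(y) = [y < h] c_n(y+1) + [y > 0] c_n(y-1) + [f or y <> h] c_n(y).
   With V := v, W := 1 + V + V^2 (so that z = V / W), m := 2h + 1 + f and K := m + 2, the series
     D_y := W (V^y - V^(m-y)) / (1 - V^K)
   solve D_y = [y = 0] + z (transfer of D)(y): away from the boundary this is the identity
   W V^k = V (V^(k+1) + V^(k-1) + V^k), and the reflection y -> m - y, which negates
   V^y - V^(m-y), absorbs the top boundary.  Comparing coefficients by induction on n gives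
   c_n(0) = [z^n] D_0 = [z^n] W (1 + (1 - V^-2) V^K / (1 - V^K)).  Finally
   a_{n,h} = c_n(h, true) - c_n(h, false) and b_{n,h} = c_n(h, false) - c_n(h - 1, true). *)

From HB Require Import structures.
From mathcomp Require Import all_boot all_algebra.
From mathcomp Require Import order boolp zify ring.
Set Implicit Arguments. Unset Strict Implicit. Unset Printing Implicit Defensive.
Import Order.TTheory GRing.Theory.
Local Open Scope ring_scope.

(* Formal power series over rat, wrapped in a record so that they can carry the
   commutative ring structure given by fps_add and fps_mul. *)
Record series : Type := Series { coeffs : nat -> rat }.
HB.instance Definition _ := gen_eqMixin series.
HB.instance Definition _ := gen_choiceMixin series.

Lemma series_ext (f g : series) : (forall n, coeffs f n = coeffs g n) -> f = g.
Proof. by case: f; case: g => g f fg; congr Series; apply: funext. Qed.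

Definition series0 := Series (fun _ => 0).
Definition series_opp (f : series) := Series (fun n => - coeffs f n).
Definition series_add (f g : series) := Series (fps_add (coeffs f) (coeffs g)).

Lemma series_addA : associative series_add.
Proof. by move=> f g h; apply: series_ext => n; rewrite /= /fps_add addrA. Qed.
Lemma series_addC : commutative series_add.
Proof. by move=> f g; apply: series_ext => n; rewrite /= /fps_add addrC. Qed.
Lemma series_add0 : left_id series0 series_add.
Proof. by move=> f; apply: series_ext => n; rewrite /= /fps_add add0r. Qed.
Lemma series_addN : left_inverse series0 series_opp series_add.
Proof. by move=> f; apply: series_ext => n; rewrite /= /fps_add addNr. Qed.

HB.instance Definition _ :=
  GRing.isZmodule.Build series series_addA series_addC series_add0 series_addN.

Definition series1 := Series fps_one.
Definition series_mul (f g : series) := Series (fps_mul (coeffs f) (coeffs g)).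

(* The n-th coefficient of a Cauchy product only depends on the first n+1
   coefficients of the factors, i.e. on their truncations to polynomials. *)
Definition trunc (N : nat) (f : nat -> rat) : {poly rat} := \poly_(i < N) f i.

Lemma fps_mul_trunc (f g : nat -> rat) n :
  fps_mul f g n = (trunc n.+1 f * trunc n.+1 g)`_n.
Proof.
rewrite coefM /fps_mul; apply: eq_bigr => i _.
by rewrite !coef_poly ltn_ord ltnS leq_subr.
Qed.

Lemma coefM_congr (p p' q q' : {poly rat}) n :
  (forall i, (i <= n)%N -> p`_i = p'`_i) -> (forall i, (i <= n)%N -> q`_i = q'`_i) ->
  (p * q)`_n = (p' * q')`_n.
Proof.
move=> pp' qq'; rewrite !coefM; apply: eq_bigr => i _.
by rewrite pp' ?qq' ?leq_subr // -ltnS.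
Qed.

Lemma coef_trunc_mul (f g : nat -> rat) n i : (i <= n)%N ->
  (trunc n.+1 (fps_mul f g))`_i = (trunc n.+1 f * trunc n.+1 g)`_i.
Proof.
move=> le_in; rewrite coef_poly ltnS le_in fps_mul_trunc.
by apply: coefM_congr => j le_ji; rewrite !coef_poly !ltnS le_ji ?(leq_trans le_ji).
Qed.

Lemma series_mulA : associative series_mul.
Proof.
move=> f g h; apply: series_ext => n /=; rewrite !fps_mul_trunc.
rewrite (@coefM_congr _ (trunc n.+1 (coeffs f)) _ (trunc n.+1 (coeffs g) * trunc n.+1 (coeffs h))) //;
  last exact: coef_trunc_mul.
rewrite mulrA; apply: coefM_congr => // i le_in.
by rewrite coef_trunc_mul.
Qed.

Lemma series_mulC : commutative series_mul.
Proof. by move=> f g; apply: series_ext => n /=; rewrite !fps_mul_trunc mulrC. Qed.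

Lemma series_mul1 : left_id series1 series_mul.
Proof.
move=> f; apply: series_ext => n /=; rewrite /fps_mul big_ord_recl /= mul1r subn0.
by rewrite big1 ?addr0 // => i _; rewrite mul0r.
Qed.

Lemma series_mulDl : left_distributive series_mul series_add.
Proof.
move=> f g h; apply: series_ext => n /=; rewrite /fps_mul /fps_add -big_split /=.
by apply: eq_bigr => i _; rewrite mulrDl.
Qed.

Lemma series1_neq0 : series1 != 0.
Proof. by apply/eqP => /(congr1 (coeffs^~ 0%N)) /eqP; rewrite oner_eq0. Qed.

HB.instance Definition _ := GRing.Zmodule_isComNzRing.Build series
  series_mulA series_mulC series_mul1 series_mulDl series1_neq0.

Lemma coeffsD (f g : series) n : coeffs (f + g) n = coeffs f n + coeffs g n.
Proof. by []. Qed.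
Lemma coeffs_mul0 (f g : series) : coeffs (f * g) 0 = coeffs f 0 * coeffs g 0.
Proof. exact: big_ord1. Qed.
Lemma coeffs_exp0 (f : series) k : coeffs (f ^+ k) 0 = coeffs f 0 ^+ k.
Proof. by elim: k => [|k IH] //; rewrite !exprS coeffs_mul0 IH. Qed.

Lemma Series_pow (f : fps) k : Series (fps_pow f k) = Series f ^+ k.
Proof. by elim: k => [|k IH] //; rewrite exprS -IH. Qed.

Definition seriesX := Series fps_X.

Lemma coeffsXM (g : series) n :
  coeffs (seriesX * g) n = if n is n'.+1 then coeffs g n' else 0.
Proof.
case: n => [|n]; first by rewrite coeffs_mul0 /= mul0r.
rewrite /= /fps_mul big_ord_recl /= mul0r add0r big_ord_recl /= mul1r subSS subn0.
by rewrite big1 ?addr0 // => i _; rewrite mul0r.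
Qed.

Lemma size_inv_seq (f : fps) n : size (inv_seq f n) = n.+1.
Proof. by elim: n => [|n IH] //=; rewrite size_rcons IH. Qed.

Lemma nth_inv_seq (f : fps) n i : (i <= n)%N -> nth 0 (inv_seq f n) i = fps_inv f i.
Proof.
rewrite /fps_inv; elim: n => [|n IH] le_in; first by move: le_in; rewrite leqn0 => /eqP ->.
case: (ltngtP i n.+1) le_in => // [lt_in _|-> //].
by rewrite /= nth_rcons size_inv_seq lt_in IH.
Qed.

Lemma fps_invS (f : fps) n : fps_inv f n.+1 =
  - (f 0%N)^-1 * \sum_(i < n.+1) f i.+1 * fps_inv f (n - i)%N.
Proof.
rewrite {1}/fps_inv /= nth_rcons size_inv_seq ltnn eqxx.
by congr (_ * _); apply: eq_bigr => i _; rewrite nth_inv_seq // leq_subr.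
Qed.

Lemma Series_invP (f : fps) : f 0%N != 0 -> Series f * Series (fps_inv f) = 1.
Proof.
move=> f0; apply: series_ext => -[|n]; first by rewrite coeffs_mul0 /= /fps_inv /= mulfV.
rewrite /= /fps_mul big_ord_recl /= subn0 fps_invS mulrA mulrN mulfV // mulN1r.
rewrite addrC; apply/eqP; rewrite subr_eq0; apply/eqP.
by apply: eq_bigr => i _; rewrite subSS.
Qed.

Definition strip_path (H : int) (top_flat : bool) (y : int) (s : seq step) : bool :=
  [&& all (fun x => 0 <= x <= H) (levels y s), last y (levels y s) == 0 &
      top_flat || (H \notin horiz_levels y s)].

Definition strip_count (h : nat) (top_flat : bool) (n y : nat) : nat :=
  count (strip_path h%:Z top_flat y%:Z) (words n).

Definition strip_next (R : nmodType) (h : nat) (top_flat : bool) (g : nat -> R) (y : nat) : R :=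
  (if (y < h)%N then g y.+1 else 0) + (if (0 < y)%N then g y.-1 else 0)
  + (if top_flat || (y != h) then g y else 0).

Lemma strip_next_map (R S : nmodType) h top_flat (phi : R -> S) (g : nat -> R) (g' : nat -> S) y :
  phi 0 = 0 -> {morph phi : a b / a + b} ->
  (forall y', (y' <= h)%N -> phi (g y') = g' y') -> (y <= h)%N ->
  phi (strip_next h top_flat g y) = strip_next h top_flat g' y.
Proof.
move=> phi0 phiD gg' le_yh; rewrite /strip_next !phiD.
have phi_if (b : bool) y' : (b -> y' <= h)%N ->
    phi (if b then g y' else 0) = if b then g' y' else 0.
  by case: b => [/(_ isT)/gg'|_].
by rewrite !phi_if // => _; exact: leq_trans (leq_pred y) le_yh.
Qed.

Lemma count_words_S (p : pred (seq step)) n : count p (words n.+1) =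
  (count (fun w => p (Up :: w)) (words n) + count (fun w => p (Down :: w)) (words n)
   + count (fun w => p (Flat :: w)) (words n))%N.
Proof. by rewrite /=; elim: (words n) => [|w l IH] //=; rewrite IH; lia. Qed.

Lemma count_andb (T : Type) (b : bool) (p : pred T) l :
  count (fun x => b && p x) l = if b then count p l else 0%N.
Proof. by case: b => //=; rewrite count_pred0. Qed.

Lemma strip_path_Up H f y w :
  strip_path H f y (Up :: w) = (0 <= y + 1 <= H) && strip_path H f (y + 1) w.
Proof. by rewrite /strip_path /= -andbA. Qed.

Lemma strip_path_Down H f y w :
  strip_path H f y (Down :: w) = (0 <= y - 1 <= H) && strip_path H f (y - 1) w.
Proof. by rewrite /strip_path /= -andbA. Qed.

Lemma strip_path_Flat H f y w :
  strip_path H f y (Flat :: w) = [&& 0 <= y <= H, f || (H != y) & strip_path H f y w].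
Proof.
rewrite /strip_path /= addr0 in_cons negb_or.
by case: f (0 <= y <= H) (H != y) (all _ (levels y w)) (last y _ == 0) (H \notin _)
  => [] [] [] [] [] [].
Qed.

Lemma strip_count0 h f y : strip_count h f 0 y = (y == 0)%N.
Proof. by rewrite /strip_count /= /strip_path /= orbT andbT addn0. Qed.

Lemma strip_countS h f n y : (y <= h)%N ->
  strip_count h f n.+1 y = strip_next h f (strip_count h f n) y.
Proof.
move=> le_yh; rewrite /strip_count count_words_S.
rewrite (eq_count (strip_path_Up _ _ _)) (eq_count (strip_path_Down _ _ _)).
rewrite (eq_count (strip_path_Flat _ _ _)) !count_andb /strip_next.
have -> : (0 <= y%:Z + 1 <= h%:Z) = (y < h)%N by apply/idP/idP; lia.
have -> : (0 <= y%:Z - 1 <= h%:Z) = (0 < y)%N by apply/idP/idP; lia.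
rewrite (_ : 0 <= y%:Z <= h%:Z); last by lia.
have -> : (h%:Z != y%:Z) = (y != h) by rewrite eqz_nat eq_sym.
have -> : y%:Z + 1 = y.+1%:Z by lia.
case: y le_yh => [|y] _; congr (_ + _ + _).
by have -> : y.+1%:Z - 1 = y%:Z by lia.
Qed.

Lemma horiz_levels_visited x y s : x \in horiz_levels y s -> x \in y :: levels y s.
Proof.
elim: s y => [|a s IH] y //=.
case: a => /=; rewrite ?addr0 ?in_cons; last case/orP => [->//|].
all: by move/IH; rewrite in_cons => /orP[->|->]; rewrite ?orbT.
Qed.

Lemma foldr_max_ge (l : seq int) x : x \in 0 :: l -> x <= foldr Num.max 0 l.
Proof.
have max_ge0 (l' : seq int) : 0 <= foldr Num.max 0 l'.
  by elim: l' => //= a l' IH; rewrite le_max IH orbT.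
elim: l => [|y l IH]; first by rewrite mem_seq1 => /eqP ->.
rewrite /= le_max !in_cons => /or3P[/eqP->|/eqP->|xl].
- by rewrite max_ge0 orbT.
- by rewrite lexx.
- by rewrite IH ?orbT // in_cons xl orbT.
Qed.

Lemma path_height_ge0 s : 0 <= path_height s.
Proof. exact/foldr_max_ge/mem_head. Qed.

Lemma horiz_le_height x s : x \in horiz_levels 0 s -> x <= path_height s.
Proof. by move/horiz_levels_visited/foldr_max_ge. Qed.

Lemma path_height_le s (H : int) : 0 <= H ->
  (path_height s <= H) = all (fun x => x <= H) (levels 0 s).
Proof. by rewrite /path_height => H0; elim: (levels 0 s) => //= x l <-; rewrite ge_max. Qed.

Lemma strip_pathE H f s : 0 <= H ->
  strip_path H f 0 s = [&& is_motzkin s, path_height s <= H & f || (H \notin horiz_levels 0 s)].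
Proof.
move=> H0; rewrite /strip_path /is_motzkin path_height_le //.
have -> : all (fun x => 0 <= x <= H) (levels 0 s) =
    all (fun x => 0 <= x) (levels 0 s) && all (fun x => x <= H) (levels 0 s).
  by elim: (levels 0 s) => //= x l ->; rewrite -!andbA; congr andb; rewrite andbCA.
by rewrite -!andbA; congr andb; rewrite andbCA.
Qed.

Lemma count_split (T : Type) (a b : pred T) l :
  count a l = (count (fun x => a x && b x) l + count (fun x => a x && ~~ b x) l)%N.
Proof. by elim: l => //= x l ->; case: (a x); case: (b x) => /=; lia. Qed.

Lemma a_count_strip n h : (a_count n h + strip_count h false n 0)%N = strip_count h true n 0.
Proof.
rewrite /strip_count [RHS](count_split _ (fun s => h%:Z \in horiz_levels 0 s)).
congr addn; apply: eq_count => s /=; last by rewrite /strip_path /= andbT -andbA.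
rewrite strip_pathE //; case hz: (h%:Z \in _); rewrite ?andbF //.
by rewrite eq_le (horiz_le_height hz) !andbT.
Qed.

Lemma b_count_strip n h : strip_count h false n 0 =
  (b_count n h + if h is h'.+1 then strip_count h' true n 0 else 0)%N.
Proof.
rewrite /strip_count /b_count (count_split _ (fun s => path_height s == h%:Z)).
congr addn.
  apply: eq_count => s /=; rewrite strip_pathE //=.
  by case: (path_height s =P h%:Z) => [->|_]; rewrite ?lexx /= ?andbF ?andbT.
case: h => [|h]; first rewrite -[X in _ = X](count_pred0 (words n)).
all: apply: eq_count => s /=; rewrite !strip_pathE //= ?andbT.
all: have ht0 := path_height_ge0 s.
  by rewrite le_eqVlt ltNge ht0 orbF; case: eqP; rewrite ?andbF.
case: (is_motzkin s) => //=; apply/idP/idP => [/andP[/andP[ht_le _] ht_ne]|ht_le].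
  by rewrite -ltzD1 addrC -intS lt_neqAle ht_ne ht_le.
have ht_lt : path_height s < h.+1%:Z by rewrite intS addrC ltzD1.
rewrite (ltW ht_lt) (lt_eqF ht_lt) andbT /=.
by apply/negP => /horiz_le_height; rewrite leNgt ht_lt.
Qed.

Lemma coeffs_transfer h f (D : nat -> series) :
  (forall y, (y <= h)%N -> D y = (if y == 0%N then 1 else 0) + seriesX * strip_next h f D y) ->
  forall n y, (y <= h)%N -> coeffs (D y) n = (strip_count h f n y)%:R.
Proof.
move=> D_eq; elim=> [|n IH] y le_yh; rewrite D_eq // coeffsD coeffsXM.
  by rewrite addr0 strip_count0; case: (y == 0%N).
have -> : coeffs (if y == 0%N then 1 else 0) n.+1 = 0 by case: (y == 0%N).
rewrite add0r strip_countS // (strip_next_map f (phi := coeffs^~ n)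
  (g' := fun y => (strip_count h f n y)%:R)) //.
by rewrite (strip_next_map f (phi := fun k : nat => k%:R : rat)
  (g' := fun y => (strip_count h f n y)%:R)) // => a b; rewrite natrD.
Qed.

Section ClosedForm.
Variable V : series.
Local Notation W := (1 + (V + V ^+ 2)).

(* V^y - V^(m-y), antisymmetric under the reflection y -> m - y. *)
Definition mirror (m y : nat) : series := V ^+ y - V ^+ (m - y).

(* W = V^{-1} + 1 + V shifts powers of V in both directions: this is the transfer
   recursion away from the boundaries, the source 1 - V^(m+2) appearing at level 0. *)
Lemma mirror_rec m y : (y < m)%N ->
  W * mirror m y = (if y == 0%N then 1 - V ^+ m.+2 else 0)
    + V * (mirror m y.+1 + (if (0 < y)%N then mirror m y.-1 else 0) + mirror m y).
Proof.
rewrite /mirror; case: y => [|y] lt_ym /=.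
  case: m lt_ym => // m _; rewrite subn0 subSS subn0 !exprS expr0; ring.
set b := (m - y.+2)%N.
have -> : (m - y.+1 = b.+1)%N by rewrite /b; lia.
have -> : (m - y = b.+2)%N by rewrite /b; lia.
rewrite !exprS; ring.
Qed.

(* With m = 2h+1+f the reflection absorbs the top boundary of the strip [0, h]:
   mirror m (h+1) vanishes when f holds and equals - mirror m h otherwise. *)
Lemma mirror_top h (f : bool) y : (y <= h)%N ->
  let m := (2 * h + 1 + f)%N in
  strip_next h f (mirror m) y
    = mirror m y.+1 + (if (0 < y)%N then mirror m y.-1 else 0) + mirror m y.
Proof.
rewrite /strip_next leq_eqVlt => /orP[/eqP ->|lt_yh]; last by rewrite lt_yh (ltn_eqF lt_yh) orbT.
rewrite ltnn eqxx orbF add0r /mirror; case: f => /=.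
  by rewrite (_ : (2 * h + 1 + 1 - h.+1 = h.+1)%N) ?subrr ?add0r //; lia.
rewrite (_ : (2 * h + 1 + 0 - h.+1 = h)%N); last by lia.
rewrite (_ : (2 * h + 1 + 0 - h = h.+1)%N); last by lia.
rewrite addr0 addrAC.
have -> : V ^+ h.+1 - V ^+ h + (V ^+ h - V ^+ h.+1) = 0 by ring.
by rewrite add0r.
Qed.

Lemma mirror_system h (f : bool) (I : series) :
  seriesX * W = V -> (1 - V ^+ (2 * h + 3 + f)) * I = 1 ->
  let D y := W * mirror (2 * h + 1 + f) y * I in
  forall y, (y <= h)%N -> D y = (if y == 0%N then 1 else 0) + seriesX * strip_next h f D y.
Proof.
move=> XW inv_I D y le_yh.
have D_next : strip_next h f D y = W * strip_next h f (mirror (2 * h + 1 + f)) y * I.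
  apply/esym/(strip_next_map f (phi := fun a => W * a * I)) => //.
  - by rewrite mulr0 mul0r.
  - by move=> a b; rewrite mulrDr mulrDl.
rewrite D_next /D mirror_top // mirror_rec; last by lia.
set S := (_ + _ + _).
have -> : (2 * h + 1 + f).+2 = (2 * h + 3 + f)%N by lia.
have V_XW a : V * a = seriesX * (W * a) by rewrite mulrA XW.
rewrite mulrDl -mulrA V_XW !mulrA.
by case: (y == 0%N); rewrite ?inv_I ?mul0r.
Qed.

End ClosedForm.

Section MotzkinStripSeries.
Variable v : fps.
Hypothesis v0 : v 0%N = 0.
Hypothesis v_eq : fps_X = fps_mul v (fps_inv (onevv v)).

Local Notation V := (Series v).
Local Notation W := (1 + (V + V ^+ 2)).

Lemma onevvE : Series (onevv v) = W.
Proof. by rewrite -Series_pow. Qed.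

Lemma coeffs_powV0 k : (0 < k)%N -> coeffs (V ^+ k) 0 = 0.
Proof. by rewrite coeffs_exp0 /= v0 expr0n => /gtn_eqF ->. Qed.

Lemma seriesX_W : seriesX * W = V.
Proof.
have W_inv : W * Series (fps_inv (onevv v)) = 1.
  rewrite -onevvE; apply: Series_invP.
  have := coeffs_powV0 (isT : (0 < 2)%N); rewrite -Series_pow /= => v2_0.
  by rewrite /onevv /fps_add /= v0 v2_0 add0r addr0 oner_eq0.
rewrite /seriesX v_eq -[Series (fps_mul _ _)]/(V * Series (fps_inv (onevv v))).
by rewrite -mulrA [_ * W]mulrC W_inv mulr1.
Qed.

Definition inv_one_sub_pow (K : nat) : series :=
  Series (fps_inv (fps_sub fps_one (fps_pow v K))).

Lemma inv_one_sub_powP K : (0 < K)%N -> (1 - V ^+ K) * inv_one_sub_pow K = 1.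
Proof.
move=> K_gt0; rewrite -Series_pow; apply: Series_invP.
have := coeffs_powV0 K_gt0; rewrite -Series_pow /= => vK_0.
by rewrite /fps_add /= vK_0 subr0 oner_eq0.
Qed.

Lemma one_add_term K : (0 < K)%N -> 1 + Series (term v K) = (1 - V ^+ (K - 2)) * inv_one_sub_pow K.
Proof.
move=> K_gt0; rewrite -[X in X + _](inv_one_sub_powP K_gt0).
rewrite -[Series (term _ _)]/((Series (fps_pow v K) - Series (fps_pow v (K - 2)))
  * inv_one_sub_pow K) !Series_pow; ring.
Qed.

Lemma strip_count_gf h (f : bool) K n : K = (2 * h + 3 + f)%N ->
  (strip_count h f n 0)%:R = coeffs (Series (onevv v) * (1 + Series (term v K))) n.
Proof.
move=> ->; have K_gt0 : (0 < 2 * h + 3 + f)%N by lia.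
rewrite -(coeffs_transfer (mirror_system seriesX_W (inv_one_sub_powP K_gt0))) //.
rewrite onevvE one_add_term //; congr (coeffs _ n); rewrite /= /mirror.
rewrite expr0 subn0 -mulrA (_ : (2 * h + 3 + f - 2 = 2 * h + 1 + f)%N) //; lia.
Qed.

Lemma lower_strip_count_gf h n :
  (if h is h'.+1 then strip_count h' true n 0 else 0)%:R
    = coeffs (Series (onevv v) * (1 + Series (term v (2 * h + 2)))) n.
Proof.
case: h => [|h]; last by apply: strip_count_gf; lia.
by rewrite one_add_term // expr0 subrr mul0r mulr0.
Qed.

Lemma onevv_mul_sub_term a b n :
  fps_mul (onevv v) (fps_sub (term v a) (term v b)) n
    = coeffs (Series (onevv v) * (1 + Series (term v a))) n
      - coeffs (Series (onevv v) * (1 + Series (term v b))) n.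
Proof.
transitivity (coeffs (Series (onevv v) * (Series (term v a) - Series (term v b))) n) => //.
by rewrite -[RHS]/(coeffs (_ - _) n); congr (coeffs _ n); ring.
Qed.

End MotzkinStripSeries.

Theorem mainTheorem2 (h : nat) (v : fps) :
  v 0%N = 0 ->
  fps_X = fps_mul v (fps_inv (onevv v)) ->
  (forall n : nat, Horiz h n =
     fps_mul (onevv v) (fps_sub (term v (2 * h + 4)) (term v (2 * h + 3))) n) /\
  (forall n : nat, NoHoriz h n =
     fps_mul (onevv v) (fps_sub (term v (2 * h + 3)) (term v (2 * h + 2))) n).
Proof.
move=> v0 v_eq; split=> n; rewrite onevv_mul_sub_term.
- rewrite -(strip_count_gf v0 v_eq (h := h) (f := true)); last by lia.
  rewrite -(strip_count_gf v0 v_eq (h := h) (f := false)); last by lia.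
  by rewrite /Horiz -(a_count_strip n h) natrD addrK.
- rewrite -(strip_count_gf v0 v_eq (h := h) (f := false)); last by lia.
  by rewrite -lower_strip_count_gf // /NoHoriz (b_count_strip n h) natrD addrK.
Qed.
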